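(* Let $\vec{\mathcal X}$ be a couple of translation invariant pseudolattices and $\vec B=(B_0,B_1)$ a complex Banach couple. Let $\{f_n\}_{n\in\mathbb Z}\in\mathcal J(\vec{\mathcal X},\vec B)$ and $f(z)=\sum_{n\in\mathbb Z}z^nf_n$, $z\in\mathbb A$. Suppose $f(s)=0$ for some $s\in\mathbb A$, and define $g:\mathbb A\to B_0+B_1$ by $g(s)=f'(s)$ and $g(z)=f(z)/(z-s)$ for $z\ne s$. Then $g\in\mathcal F_{\vec{\mathcal X}}(\vec B)$, and the Laurent coefficients $\{g_n\}$ of $g$ on $\mathbb A$ (i.e. $g(z)=\sum_n z^ng_n$) satisfy $\{g_n\}\in\mathcal J(\vec{\mathcal X},\vec B)$ and $$\|\{g_n\}\|_{\mathcal J(\vec{\mathcal X},\vec B)}\le\delta(s)\|\{f_n\}\|_{\mathcal J(\vec{\mathcal X},\vec B)},\qquad \delta(s)=\max\{(|s|-1)^{-1},(e-|s|)^{-1}\}.$$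
   Context: A pseudolattice $\mathcal{X}$ assigns to every complex Banach space $B$ a Banach space $\mathcal{X}(B)$ of two-sided sequences in $B$ such that: $\mathcal X(A)$ is a closed subspace of $\mathcal X(B)$ when $A$ is a closed subspace of $B$; $\|\{Ta_n\}\|_{\mathcal{X}(B)}\le C\|T\|\|\{a_n\}\|_{\mathcal{X}(A)}$ for bounded linear $T:A\to B$ with a fixed $C$; and $\|b_m\|_B\le\|\{b_n\}\|_{\mathcal{X}(B)}$. A couple $(\mathcal X_0,\mathcal X_1)$ is translation invariant if the shifts $\{b_n\}\mapsto\{b_{n+k}\}$, $k\in\mathbb Z$, are isometries of each $\mathcal X_j(B)$ onto itself for every $B$. $\mathcal{J}(\vec{\mathcal{X}},\vec B)$ is the Banach space of sequences $\{b_n\}\subset B_0\cap B_1$ with norm $\max\{\|\{b_n\}\|_{\mathcal{X}_0(B_0)},\|\{e^nb_n\}\|_{\mathcal{X}_1(B_1)}\}<\infty$. $\mathbb{A}=\{z\in\mathbb C:1<|z|<e\}$. $\mathcal{F}_{\vec{\mathcal{X}}}(\vec B)$ is the Banach space of analytic functions $f:\mathbb{A}\to B_0+B_1$, $f(z)=\sum_n z^nb_n$ with $\{b_n\}\in\mathcal{J}(\vec{\mathcal{X}},\vec B)$, normed by $\|\{b_n\}\|_{\mathcal J}$. *)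

From Stdlib Require Import Reals ZArith.
From Coquelicot Require Import Coquelicot.
Open Scope R_scope.

Definition BanachC := CompleteNormedModule C_AbsRing.

Definition seq_plus {B : BanachC} (a b : Z -> B) : Z -> B := fun n => plus (a n) (b n).
Definition seq_scal {B : BanachC} (l : C) (a : Z -> B) : Z -> B := fun n => scal (l : C_AbsRing) (a n).
Definition seq_zero {B : BanachC} : Z -> B := fun _ => zero.
Definition seq_minus {B : BanachC} (a b : Z -> B) : Z -> B := fun n => minus (a n) (b n).
Definition shift {B : BanachC} (k : Z) (b : Z -> B) : Z -> B := fun n => b (n + k)%Z.

Definition is_linear {A B : BanachC} (T : A -> B) : Prop :=
  (forall x y, T (plus x y) = plus (T x) (T y)) /\
  (forall (l : C_AbsRing) x, T (scal l x) = scal l (T x)).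

(* A pseudolattice: to every complex Banach space B a Banach space X(B)
   of two-sided sequences in B, given by a membership predicate and a norm. *)
Record pseudolattice : Type := {
  pl_mem : forall B : BanachC, (Z -> B) -> Prop;
  pl_norm : forall B : BanachC, (Z -> B) -> R;
  pl_zero : forall B, pl_mem B seq_zero;
  pl_plus : forall B a b, pl_mem B a -> pl_mem B b -> pl_mem B (seq_plus a b);
  pl_scal : forall B l a, pl_mem B a -> pl_mem B (seq_scal l a);
  pl_norm_ge0 : forall B a, pl_mem B a -> 0 <= pl_norm B a;
  pl_norm_eq0 : forall B a, pl_mem B a -> pl_norm B a = 0 -> a = seq_zero;
  pl_norm_triangle : forall B a b, pl_mem B a -> pl_mem B b ->
      pl_norm B (seq_plus a b) <= pl_norm B a + pl_norm B b;
  pl_norm_scal : forall B l a, pl_mem B a ->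
      pl_norm B (seq_scal l a) = Cmod l * pl_norm B a;
  pl_complete : forall (B : BanachC) (u : nat -> Z -> B), (forall k, pl_mem B (u k)) ->
      (forall eps, 0 < eps -> exists N, forall p q, (N <= p)%nat -> (N <= q)%nat ->
         pl_norm B (seq_minus (u p) (u q)) < eps) ->
      exists v, pl_mem B v /\
      (forall eps, 0 < eps -> exists N, forall p, (N <= p)%nat ->
         pl_norm B (seq_minus (u p) v) < eps);
  (* closed subspaces: A is identified with its image under a linear isometry
     j : A -> B; X(A) is then (isometrically) a closed subspace of X(B) *)
  pl_subspace : forall (A B : BanachC) (j : A -> B), is_linear j ->
      (forall x, norm (j x) = norm x) ->
      (forall a, pl_mem A a -> pl_mem B (fun n => j (a n)) /\
                 pl_norm B (fun n => j (a n)) = pl_norm A a) /\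
      (forall (u : nat -> Z -> A) (v : Z -> B), (forall k, pl_mem A (u k)) ->
         pl_mem B v ->
         (forall eps, 0 < eps -> exists N, forall p, (N <= p)%nat ->
            pl_norm B (seq_minus (fun n => j (u p n)) v) < eps) ->
         exists a, pl_mem A a /\ v = (fun n => j (a n)));
  (* bounded operators; M is any bound for the operator norm of T *)
  pl_const : R;
  pl_operator : forall (A B : BanachC) (T : A -> B) (M : R), is_linear T ->
      0 <= M -> (forall x, norm (T x) <= M * norm x) ->
      forall a, pl_mem A a -> pl_mem B (fun n => T (a n)) /\
        pl_norm B (fun n => T (a n)) <= pl_const * M * pl_norm A a;
  pl_coord : forall (B : BanachC) a, pl_mem B a -> forall m, norm (a m) <= pl_norm B a
}.

Definition translation_invariant (X : pseudolattice) : Prop :=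
  forall (B : BanachC) (k : Z) (b : Z -> B),
    (pl_mem X B b <-> pl_mem X B (shift k b)) /\
    (pl_mem X B b -> pl_norm X B (shift k b) = pl_norm X B b).

(* A complex Banach couple: B0, B1 linearly and injectively placed in a common
   complex vector space U, compatibly (the K-functional K(1,.) on B0+B1 is
   definite, i.e. B0+B1 is a Hausdorff normed space). *)
Record couple : Type := {
  cU : ModuleSpace C_AbsRing;
  cB0 : BanachC;
  cB1 : BanachC;
  i0 : cB0 -> cU;
  i1 : cB1 -> cU;
  i0_plus : forall x y, i0 (plus x y) = plus (i0 x) (i0 y);
  i0_scal : forall (l : C_AbsRing) x, i0 (scal l x) = scal l (i0 x);
  i1_plus : forall x y, i1 (plus x y) = plus (i1 x) (i1 y);
  i1_scal : forall (l : C_AbsRing) x, i1 (scal l x) = scal l (i1 x);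
  i0_inj : forall x y, i0 x = i0 y -> x = y;
  i1_inj : forall x y, i1 x = i1 y -> x = y;
  c_hausdorff : forall x : cU,
    (forall eps, 0 < eps -> exists a b, x = plus (i0 a) (i1 b) /\ norm a + norm b < eps) ->
    x = zero
}.

(* K(1, x) < r, the norm of B0 + B1 *)
Definition Klt (cp : couple) (x : cU cp) (r : R) : Prop :=
  exists (a : cB0 cp) (b : cB1 cp), x = plus (i0 cp a) (i1 cp b) /\ norm a + norm b < r.

Definition Kseries (cp : couple) (u : nat -> cU cp) (x : cU cp) : Prop :=
  forall eps, 0 < eps -> exists N, forall n, (N <= n)%nat ->
    Klt cp (minus x (sum_n u n)) eps.

Definition zpowC (z : C) (n : Z) : C :=
  match n with
  | Z0 => RtoC 1
  | Zpos p => pow_n (z : C_Ring) (Pos.to_nat p)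
  | Zneg p => pow_n ((/ z)%C : C_Ring) (Pos.to_nat p)
  end.

Definition laurent_sum (cp : couple) (h : Z -> cU cp) (z : C) (x : cU cp) : Prop :=
  exists xp xm : cU cp,
    Kseries cp (fun n => scal (zpowC z (Z.of_nat n) : C_AbsRing) (h (Z.of_nat n))) xp /\
    Kseries cp (fun n => scal (zpowC z (- Z.of_nat (S n)) : C_AbsRing)
                              (h (- Z.of_nat (S n))%Z)) xm /\
    x = plus xp xm.

Definition Kderiv (cp : couple) (f : C -> cU cp) (s : C) (l : cU cp) : Prop :=
  forall eps, 0 < eps -> exists del, 0 < del /\
    forall z : C, Cmod (z - s)%C < del -> z <> s ->
      Klt cp (minus (minus (f z) (f s)) (scal ((z - s)%C : C_AbsRing) l)) (eps * Cmod (z - s)%C).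

Definition inA (z : C) : Prop := 1 < Cmod z < exp 1.

Definition eweight {B : BanachC} (c : Z -> B) : Z -> B :=
  fun n => scal (RtoC (exp (IZR n)) : C_AbsRing) (c n).

(* {b_n} in J(X, B): a sequence in B0 ∩ B1, given by its B0 and B1 representatives *)
Definition inJ (X0 X1 : pseudolattice) (cp : couple) (a : Z -> cB0 cp) (c : Z -> cB1 cp) : Prop :=
  (forall n, i0 cp (a n) = i1 cp (c n)) /\
  pl_mem X0 (cB0 cp) a /\ pl_mem X1 (cB1 cp) (eweight c).

Definition Jnorm (X0 X1 : pseudolattice) (cp : couple) (a : Z -> cB0 cp) (c : Z -> cB1 cp) : R :=
  Rmax (pl_norm X0 (cB0 cp) a) (pl_norm X1 (cB1 cp) (eweight c)).

Definition delta (s : C) : R := Rmax (/ (Cmod s - 1)) (/ (exp 1 - Cmod s)).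

From Pilot Require Import Defs.
From Stdlib Require Import Reals ZArith.
From Coquelicot Require Import Coquelicot.
Open Scope R_scope.

From Stdlib Require Import Lra Lia FunctionalExtensionality.

(* The Laurent coefficients of f(z) / (z - s) must solve
   the recurrence g_(m-1) = f_m + s g_m, which has two natural solutions:
   - in B0, solved downwards, g_n = - sum_(k>=0) s^(-k-1) f_(n-k): since |s| > 1 this converges
     in X0(B0), with norm at most (|s| - 1)^(-1) |{f_n}|;
   - in B1, solved upwards, g_n = sum_(k>=0) s^k f_(n+1+k): since |s| < e this converges with
     the weights e^n in X1(B1), with norm at most (e - |s|)^(-1) |{e^n f_n}|.
   Both come from one fact, Banach's fixed point theorem in a translation invariant pseudolattice
   (pl_shift_recurrence). Telescoping the recurrence against the Laurent series of f gives, for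
   every z in the annulus, f(z) + g^0_(-1) = (z - s) y(z) + g^1_(-1), where y(z) is the Laurent sum
   of g^1 (n >= 0) and g^0 (n < 0). At z = s it yields g^0_(-1) = g^1_(-1), and the recurrence
   propagates this to all n, so {g_n} lies in J with the stated bound and f(z) = (z - s) y(z).
   Hence g = y off s, while at s, y is Lipschitz and f'(s) = lim y(w), so g(s) = y(s). *)

Lemma pow_le_decr (q : R) (m n : nat) : 0 <= q <= 1 -> (m <= n)%nat -> q ^ n <= q ^ m.
Proof.
  intros Hq Hmn; induction Hmn as [|n Hmn IH]; [lra|].
  simpl; pose proof (pow_le q n ltac:(lra)); nra.
Qed.

Lemma geom_eventually_small (M q eps : R) : 0 <= q < 1 -> 0 < eps ->
  exists N, forall n, (N <= n)%nat -> M * q ^ n < eps.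
Proof.
  intros Hq Heps.
  destruct (pow_lt_1_zero q ltac:(rewrite Rabs_pos_eq; lra) (eps / (Rabs M + 1)))
    as [N HN]; [apply Rdiv_lt_0_compat; pose proof (Rabs_pos M); lra|].
  exists N; intros n Hn; specialize (HN n Hn).
  rewrite Rabs_pos_eq in HN by (apply pow_le; lra).
  pose proof (Rabs_pos M); pose proof (Rle_abs M); pose proof (pow_le q n ltac:(lra)).
  apply Rmult_lt_compat_l with (r := Rabs M + 1) in HN; [|lra].
  replace ((Rabs M + 1) * (eps / (Rabs M + 1))) with eps in HN by (field; lra).
  nra.
Qed.

Lemma linear_times_geom (r : R) : 0 <= r < 1 ->
  exists K, 0 <= K /\ forall n, INR (S n) * r ^ n <= K * ((1 + r) / 2) ^ n.
Proof.
  intros Hr. set (rho := (1 + r) / 2). set (u := r / rho).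
  assert (Hu : 0 <= u < 1) by (unfold u, rho; split;
    [apply Rdiv_le_0_compat; lra | apply Rmult_lt_reg_r with ((1 + r) / 2); field_simplify; lra]).
  (* (n + 1) u^n <= 1 + u + ... + u^n = (1 - u^(n+1)) / (1 - u) *)
  assert (Hsum : forall n, INR (S n) * u ^ n <= (1 - u ^ S n) / (1 - u)).
  { induction n as [|n IH].
    - simpl; apply Rmult_le_reg_r with (1 - u); [lra|]; field_simplify; lra.
    - rewrite S_INR; apply Rmult_le_reg_r with (1 - u); [lra|].
      replace ((1 - u ^ S (S n)) / (1 - u) * (1 - u)) with (1 - u ^ S (S n)) by (field; lra).
      apply Rmult_le_compat_r with (r := u * (1 - u)) in IH; [|nra].
      replace ((1 - u ^ S n) / (1 - u) * (u * (1 - u))) with (u * (1 - u ^ S n)) in IH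
        by (field; lra).
      pose proof (pow_le u n ltac:(lra)); pose proof (pow_le_decr u 0 n ltac:(lra) ltac:(lia)).
      set (k := INR (S n)) in *; simpl in *.
      assert (u * u ^ n <= 1) by nra.
      assert (u * u ^ n * (1 - u) <= 1 - u) by nra. nra. }
  exists (1 / (1 - u)); split; [apply Rdiv_le_0_compat; lra|].
  intro n. replace (r ^ n) with (u ^ n * rho ^ n)
    by (rewrite <- Rpow_mult_distr; unfold u, rho; f_equal; field; lra).
  pose proof (pow_le rho n ltac:(unfold rho; lra)); pose proof (pow_le u (S n) ltac:(lra)).
  specialize (Hsum n).
  assert (INR (S n) * u ^ n <= 1 / (1 - u)).
  { apply Rle_trans with (1 := Hsum); unfold Rdiv; apply Rmult_le_compat_r;
      [left; apply Rinv_0_lt_compat|]; lra. }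
  rewrite <- Rmult_assoc; apply Rmult_le_compat_r; auto.
Qed.

Lemma pow_n_Cpow (z : C) (n : nat) : pow_n (z : C_Ring) n = (z ^ n)%C.
Proof. induction n as [|n IH]; simpl; [reflexivity | rewrite IH; reflexivity]. Qed.

Lemma zpowC_nat (z : C) (n : nat) : zpowC z (Z.of_nat n) = (z ^ n)%C.
Proof.
  destruct n as [|n]; [reflexivity|].
  simpl Z.of_nat; change (pow_n (z : C_Ring) (Pos.to_nat (Pos.of_succ_nat n)) = (z ^ S n)%C).
  rewrite SuccNat2Pos.id_succ; apply pow_n_Cpow.
Qed.

Lemma zpowC_neg (z : C) (n : nat) : zpowC z (- Z.of_nat (S n)) = ((/ z) ^ S n)%C.
Proof.
  simpl Z.of_nat; simpl Z.opp.
  change (pow_n ((/ z)%C : C_Ring) (Pos.to_nat (Pos.of_succ_nat n)) = ((/ z) ^ S n)%C).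
  rewrite SuccNat2Pos.id_succ; apply pow_n_Cpow.
Qed.

Lemma Cpow_diff_le (a b : C) (r : R) (n : nat) : Cmod a <= r -> Cmod b <= r ->
  Cmod (a ^ S n - b ^ S n)%C <= INR (S n) * r ^ n * Cmod (a - b)%C.
Proof.
  intros Ha Hb; induction n as [|n IH].
  - simpl; rewrite !Cmult_1_r; lra.
  - replace (a ^ S (S n) - b ^ S (S n))%C with (a * (a ^ S n - b ^ S n) + (a - b) * b ^ S n)%C
      by (simpl; ring).
    eapply Rle_trans; [apply Cmod_triangle|]; rewrite !Cmod_mult, Cmod_pow.
    pose proof (Cmod_ge_0 a); pose proof (Cmod_ge_0 (a - b)%C).
    pose proof (Cmod_ge_0 (a ^ S n - b ^ S n)%C).
    assert (Cmod b ^ S n <= r ^ S n) by (apply pow_incr; split; [apply Cmod_ge_0|auto]).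
    assert (Cmod a * Cmod (a ^ S n - b ^ S n)%C <= r * (INR (S n) * r ^ n * Cmod (a - b)%C))
      by (apply Rmult_le_compat; auto).
    rewrite (S_INR (S n)); simpl in *; nra.
Qed.

Lemma Cpow_lipschitz (r : R) : 0 <= r < 1 -> exists K, 0 <= K /\
  forall (a b : C) (n : nat), Cmod a <= r -> Cmod b <= r ->
    Cmod (a ^ n - b ^ n)%C <= K * Cmod (a - b)%C * ((1 + r) / 2) ^ n.
Proof.
  intros Hr; destruct (linear_times_geom r Hr) as [K [HK Hgeom]].
  exists (K / ((1 + r) / 2)); split; [apply Rdiv_le_0_compat; lra|].
  intros a b [|n] Ha Hb.
  - simpl; replace (1 - 1)%C with (RtoC 0) by ring; rewrite Cmod_0.
    pose proof (Cmod_ge_0 (a - b)%C); apply Rmult_le_pos; [|lra].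
    apply Rmult_le_pos; [apply Rdiv_le_0_compat|]; lra.
  - eapply Rle_trans; [apply (Cpow_diff_le a b r n Ha Hb)|].
    pose proof (Cmod_ge_0 (a - b)%C).
    replace (K / ((1 + r) / 2) * Cmod (a - b)%C * ((1 + r) / 2) ^ S n)
      with (K * ((1 + r) / 2) ^ n * Cmod (a - b)%C) by (simpl; field; lra).
    apply Rmult_le_compat_r; auto.
Qed.

Lemma inv_gt_1 (x : R) : 1 < x -> 0 < / x < 1.
Proof.
  intro Hx; split; [apply Rinv_0_lt_compat; lra|].
  rewrite <- Rinv_1; apply Rinv_lt_contravar; lra.
Qed.

Lemma exp_neg_nat (n : nat) : exp (- IZR (Z.of_nat n)) = (/ exp 1) ^ n.
Proof.
  rewrite <- INR_IZR_INZ; induction n as [|n IH]; [simpl; rewrite Ropp_0; apply exp_0|].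
  rewrite S_INR, Ropp_plus_distr, exp_plus, IH, exp_Ropp; simpl; ring.
Qed.

Lemma minus_plus_plus {G : AbelianGroup} (a b c d : G) :
  minus (plus a b) (plus c d) = plus (minus a c) (minus b d).
Proof.
  unfold minus; rewrite opp_plus, !plus_assoc; f_equal.
  rewrite <- !plus_assoc; f_equal; apply plus_comm.
Qed.

Lemma minus_eq_zero_inv {G : AbelianGroup} (x y : G) : minus x y = zero -> x = y.
Proof. intro H; apply (plus_reg_r (opp y)); rewrite plus_opp_r; exact H. Qed.

Lemma minus_as_scal {K : Ring} {V : ModuleSpace K} (x y : V) :
  minus x y = plus x (scal (opp one) y).
Proof. rewrite scal_opp_one; reflexivity. Qed.

Lemma affine_minus {K : Ring} {V : ModuleSpace K} (c x y : V) (k : K) :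
  minus (plus c (scal k x)) (plus c (scal k y)) = scal k (minus x y).
Proof.
  rewrite (minus_plus_plus (G := ModuleSpace.AbelianGroup _ V)), minus_eq_zero, plus_zero_l.
  rewrite scal_minus_distr_l; reflexivity.
Qed.

Lemma affine_zero {K : Ring} {V : ModuleSpace K} (c : V) (k : K) : plus c (scal k zero) = c.
Proof. rewrite scal_zero_r, plus_zero_r; reflexivity. Qed.

Section Additive.
Context {G H : AbelianGroup} (T : G -> H).
Hypothesis T_plus : forall x y, T (plus x y) = plus (T x) (T y).

Lemma additive_zero : T zero = zero.
Proof.
  apply (plus_reg_l (T zero)); rewrite <- T_plus, !plus_zero_r; reflexivity.
Qed.

Lemma additive_opp (x : G) : T (opp x) = opp (T x).
Proof.
  apply (plus_reg_l (T x)); rewrite <- T_plus, !plus_opp_r; apply additive_zero.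
Qed.

Lemma additive_minus (x y : G) : T (minus x y) = minus (T x) (T y).
Proof. unfold minus; rewrite T_plus, additive_opp; reflexivity. Qed.

Lemma additive_sum (u : nat -> G) (N : nat) : T (sum_n u N) = sum_n (fun n => T (u n)) N.
Proof.
  induction N as [|N IH]; [rewrite !sum_O; reflexivity|].
  rewrite !sum_Sn, T_plus, IH; reflexivity.
Qed.

End Additive.

Section NormedSeries.
Context {V : NormedModule C_AbsRing}.

Lemma is_series_eps (a : nat -> V) (l : V) : is_series a l ->
  forall eps, 0 < eps -> exists N, forall n, (N <= n)%nat -> norm (minus l (sum_n a n)) < eps.
Proof.
  intros Ha eps Heps.
  destruct (proj1 (filterlim_locally_ball_norm _ _) Ha (mkposreal eps Heps)) as [N HN].
  exists N; intros n Hn; rewrite <- opp_minus, norm_opp; exact (HN n Hn).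
Qed.

Lemma is_series_terms_vanish (a : nat -> V) (l : V) : is_series a l ->
  forall eps, 0 < eps -> exists N, forall n, (N <= n)%nat -> norm (a n) < eps.
Proof.
  intros Ha eps Heps; destruct (is_series_eps a l Ha (eps / 2)) as [N HN]; [lra|].
  exists (S N); intros [|n] Hn; [lia|].
  assert (E : a (S n) = minus (sum_n a (S n)) (sum_n a n)).
  { rewrite sum_Sn; unfold minus.
    rewrite plus_comm, plus_assoc, plus_opp_l, plus_zero_l; reflexivity. }
  rewrite E, (minus_trans l); eapply Rle_lt_trans; [apply norm_triangle|].
  rewrite <- opp_minus, norm_opp.
  pose proof (HN n ltac:(lia)); pose proof (HN (S n) ltac:(lia)); lra.
Qed.

Lemma is_series_norm_geom (a : nat -> V) (l : V) (M q : R) : 0 <= q < 1 ->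
  (forall n, norm (a n) <= M * q ^ n) -> is_series a l -> norm l <= M / (1 - q).
Proof.
  intros Hq Ha Hl.
  assert (Hpartial : forall N, norm (sum_n a N) <= M / (1 - q)).
  { assert (H : forall N, norm (sum_n a N) <= M * (1 - q ^ S N) / (1 - q)).
    { induction N as [|N IH].
      - rewrite sum_O; specialize (Ha 0%nat); simpl in *.
        replace (M * (1 - q * 1) / (1 - q)) with M by (field; lra); lra.
      - rewrite sum_Sn; eapply Rle_trans; [apply norm_triangle|].
        specialize (Ha (S N)).
        replace (M * (1 - q ^ S (S N)) / (1 - q)) with (M * (1 - q ^ S N) / (1 - q) + M * q ^ S N)
          by (simpl; field; lra). lra. }
    intro N; specialize (H N).
    assert (HM : 0 <= M)
      by (specialize (Ha 0%nat); simpl in Ha; pose proof (norm_ge_0 (a 0%nat)); lra).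
    pose proof (pow_le q (S N) ltac:(lra)).
    apply Rle_trans with (1 := H); unfold Rdiv; apply Rmult_le_compat_r;
      [left; apply Rinv_0_lt_compat; lra | nra]. }
  apply Rnot_lt_le; intro Hgt.
  destruct (is_series_eps a l Hl (norm l - M / (1 - q))) as [N HN]; [lra|].
  specialize (HN N (le_n N)); specialize (Hpartial N).
  pose proof (norm_triangle_inv l (sum_n a N)).
  pose proof (Rle_abs (norm l - norm (sum_n a N))); lra.
Qed.

End NormedSeries.

Lemma ex_series_geom_bound {V : CompleteNormedModule C_AbsRing} (a : nat -> V) (M q : R) :
  0 <= q < 1 -> (forall n, norm (a n) <= M * q ^ n) -> ex_series a.
Proof.
  intros Hq Ha; apply (ex_series_le a (fun n => M * q ^ n) Ha).
  apply (ex_series_scal_l (V := R_NormedModule) M (fun n => q ^ n)).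
  apply ex_series_geom; rewrite Rabs_pos_eq; lra.
Qed.

(* The norm axioms restated for the carrier of a Banach space (the generic statements do
   not unify with the plus/scal instances inherited by a CompleteNormedModule). *)
Section BanachNorm.
Variable B : BanachC.

Lemma Bnorm_triangle (x y : B) : norm (plus x y) <= norm x + norm y.
Proof. exact (@norm_triangle _ (CompleteNormedModule.NormedModule _ B) x y). Qed.

Lemma Bnorm_scal (l : C) (x : B) : norm (scal (l : C_AbsRing) x) <= Cmod l * norm x.
Proof. exact (@norm_scal _ (CompleteNormedModule.NormedModule _ B) l x). Qed.

Lemma Bnorm_zero : norm (zero : B) = 0.
Proof. exact (@norm_zero _ (CompleteNormedModule.NormedModule _ B)). Qed.

Lemma Bnorm_opp (x : B) : norm (opp x) = norm x.
Proof. exact (@norm_opp _ (CompleteNormedModule.NormedModule _ B) x). Qed.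

Lemma Bnorm_minus_sym (x y : B) : norm (minus x y) = norm (minus y x).
Proof. rewrite <- opp_minus; apply Bnorm_opp. Qed.

End BanachNorm.

Section SumSpace.
Variable cp : couple.
Local Notation U := (cU cp).

Lemma i0_zero : i0 cp zero = zero.
Proof. exact (additive_zero (i0 cp) (i0_plus cp)). Qed.
Lemma i1_zero : i1 cp zero = zero.
Proof. exact (additive_zero (i1 cp) (i1_plus cp)). Qed.
Lemma i0_minus (x y : cB0 cp) : i0 cp (minus x y) = minus (i0 cp x) (i0 cp y).
Proof. exact (additive_minus (i0 cp) (i0_plus cp) x y). Qed.
Lemma i1_minus (x y : cB1 cp) : i1 cp (minus x y) = minus (i1 cp x) (i1 cp y).
Proof. exact (additive_minus (i1 cp) (i1_plus cp) x y). Qed.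

Lemma Klt_mono (x : U) (r r' : R) : r <= r' -> Klt cp x r -> Klt cp x r'.
Proof. intros H [a [b [E N]]]; exists a, b; split; [exact E | lra]. Qed.

Lemma Klt_plus (x y : U) (r r' : R) : Klt cp x r -> Klt cp y r' -> Klt cp (plus x y) (r + r').
Proof.
  intros [a [b [E N]]] [a' [b' [E' N']]]; exists (plus a a'), (plus b b'); split.
  - rewrite i0_plus, i1_plus, E, E', !plus_assoc; f_equal.
    rewrite <- !plus_assoc; f_equal; apply plus_comm.
  - pose proof (Bnorm_triangle _ a a'); pose proof (Bnorm_triangle _ b b'); lra.
Qed.

Lemma Klt_scal (l : C) (x : U) (r : R) :
  Klt cp x r -> Klt cp (scal (l : C_AbsRing) x) ((Cmod l + 1) * r).
Proof.
  intros [a [b [E N]]]; exists (scal (l : C_AbsRing) a), (scal (l : C_AbsRing) b); split.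
  - rewrite E, scal_distr_l, i0_scal, i1_scal; reflexivity.
  - pose proof (Bnorm_scal _ l a); pose proof (Bnorm_scal _ l b).
    pose proof (Cmod_ge_0 l); pose proof (norm_ge_0 a); pose proof (norm_ge_0 b); nra.
Qed.

Lemma Klt_opp (x : U) (r : R) : Klt cp x r -> Klt cp (opp x) r.
Proof.
  intros [a [b [E N]]]; exists (opp a), (opp b); split.
  - rewrite E, (@opp_plus (ModuleSpace.AbelianGroup _ U)).
    rewrite (additive_opp (i0 cp) (i0_plus cp)), (additive_opp (i1 cp) (i1_plus cp)); reflexivity.
  - rewrite !Bnorm_opp; exact N.
Qed.

Lemma Klt_all_zero (x : U) : (forall eps, 0 < eps -> Klt cp x eps) -> x = zero.
Proof. intro H; apply c_hausdorff; exact H. Qed.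

(* Convergence in B0 + B1; Kseries u x is by definition Kconv (sum_n u) x. *)
Definition Kconv (u : nat -> U) (x : U) : Prop :=
  forall eps, 0 < eps -> exists N, forall n, (N <= n)%nat -> Klt cp (minus x (u n)) eps.

Lemma Kconv_unique (u : nat -> U) (x y : U) : Kconv u x -> Kconv u y -> x = y.
Proof.
  intros Hx Hy; apply (plus_reg_r (opp y)); rewrite plus_opp_r.
  apply Klt_all_zero; intros eps He.
  destruct (Hx (eps / 2)) as [N1 H1]; [lra|]; destruct (Hy (eps / 2)) as [N2 H2]; [lra|].
  specialize (H1 (N1 + N2)%nat ltac:(lia)); specialize (H2 (N1 + N2)%nat ltac:(lia)).
  change (Klt cp (minus x y) eps); rewrite (minus_trans (u (N1 + N2)%nat)), <- (opp_minus y).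
  replace eps with (eps / 2 + eps / 2) by lra; apply Klt_plus; [exact H1 | apply Klt_opp, H2].
Qed.

Lemma Kconv_ext (u v : nat -> U) (x : U) : (forall n, u n = v n) -> Kconv u x -> Kconv v x.
Proof.
  intros E H eps He; destruct (H eps He) as [N HN]; exists N; intros n Hn; rewrite <- E; auto.
Qed.

Lemma Kconv_const (c : U) : Kconv (fun _ => c) c.
Proof.
  intros eps He; exists 0%nat; intros n _; exists zero, zero.
  rewrite i0_zero, i1_zero, plus_zero_r, minus_eq_zero; split; [reflexivity|].
  rewrite !Bnorm_zero; lra.
Qed.

Lemma Kconv_plus (u v : nat -> U) (x y : U) :
  Kconv u x -> Kconv v y -> Kconv (fun n => plus (u n) (v n)) (plus x y).
Proof.
  intros Hx Hy eps He.
  destruct (Hx (eps / 2)) as [N1 H1]; [lra|]; destruct (Hy (eps / 2)) as [N2 H2]; [lra|].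
  exists (N1 + N2)%nat; intros n Hn.
  rewrite (minus_plus_plus (G := ModuleSpace.AbelianGroup _ U)).
  replace eps with (eps / 2 + eps / 2) by lra; apply Klt_plus; [apply H1 | apply H2]; lia.
Qed.

Lemma Kconv_scal (l : C) (u : nat -> U) (x : U) :
  Kconv u x -> Kconv (fun n => scal (l : C_AbsRing) (u n)) (scal (l : C_AbsRing) x).
Proof.
  intros H eps He; pose proof (Cmod_ge_0 l).
  destruct (H (eps / (Cmod l + 1))) as [N HN]; [apply Rdiv_lt_0_compat; lra|].
  exists N; intros n Hn; rewrite <- scal_minus_distr_l.
  replace eps with ((Cmod l + 1) * (eps / (Cmod l + 1))) by (field; lra).
  apply Klt_scal, HN, Hn.
Qed.

Lemma Kconv_i0 (u : nat -> cB0 cp) (l : cB0 cp) :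
  (forall eps, 0 < eps -> exists N, forall n, (N <= n)%nat -> norm (minus l (u n)) < eps) ->
  Kconv (fun n => i0 cp (u n)) (i0 cp l).
Proof.
  intros H eps He; destruct (H eps He) as [N HN]; exists N; intros n Hn.
  exists (minus l (u n)), zero; rewrite i1_zero, plus_zero_r, i0_minus; split; [reflexivity|].
  rewrite Bnorm_zero, Rplus_0_r; apply HN, Hn.
Qed.

Lemma Kconv_i1 (u : nat -> cB1 cp) (l : cB1 cp) :
  (forall eps, 0 < eps -> exists N, forall n, (N <= n)%nat -> norm (minus l (u n)) < eps) ->
  Kconv (fun n => i1 cp (u n)) (i1 cp l).
Proof.
  intros H eps He; destruct (H eps He) as [N HN]; exists N; intros n Hn.
  exists zero, (minus l (u n)); rewrite i0_zero, plus_zero_l, i1_minus; split; [reflexivity|].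
  rewrite Bnorm_zero, Rplus_0_l; apply HN, Hn.
Qed.

Lemma Kseries_i0 (u : nat -> cB0 cp) (l : cB0 cp) :
  is_series u l -> Kseries cp (fun n => i0 cp (u n)) (i0 cp l).
Proof.
  intro H; apply (Kconv_ext (fun N => i0 cp (sum_n u N))).
  - intro N; apply (additive_sum (i0 cp) (i0_plus cp)).
  - apply Kconv_i0, (is_series_eps (V := CompleteNormedModule.NormedModule _ (cB0 cp))), H.
Qed.

Lemma Kseries_i1 (u : nat -> cB1 cp) (l : cB1 cp) :
  is_series u l -> Kseries cp (fun n => i1 cp (u n)) (i1 cp l).
Proof.
  intro H; apply (Kconv_ext (fun N => i1 cp (sum_n u N))).
  - intro N; apply (additive_sum (i1 cp) (i1_plus cp)).
  - apply Kconv_i1, (is_series_eps (V := CompleteNormedModule.NormedModule _ (cB1 cp))), H.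
Qed.

End SumSpace.

Section PseudolatticeNorm.
Variables (X : pseudolattice) (B : BanachC).
Local Notation mem := (pl_mem X B).
Local Notation nrm := (pl_norm X B).
Local Notation MB := (CompleteNormedModule.ModuleSpace C_AbsRing B).

Lemma pl_minus (a b : Z -> B) : mem a -> mem b -> mem (seq_minus a b).
Proof.
  intros Ha Hb; replace (seq_minus a b) with (seq_plus a (seq_scal (opp one) b)).
  - apply pl_plus; [exact Ha | apply pl_scal, Hb].
  - apply functional_extensionality; intro n; symmetry; exact (minus_as_scal (V := MB) (a n) (b n)).
Qed.

Lemma pl_norm_seq_zero : nrm seq_zero = 0.
Proof.
  replace (@seq_zero B) with (seq_scal 0%R (@seq_zero B)).
  - rewrite pl_norm_scal, Cmod_0 by apply pl_zero; ring.
  - apply functional_extensionality; intro n; exact (scal_zero_r (V := MB) _).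
Qed.

Lemma seq_minus_zero (a : Z -> B) : seq_minus a seq_zero = a.
Proof.
  apply functional_extensionality; intro n; exact (minus_zero_r (G := MB) (a n)).
Qed.

Lemma pl_norm_minus_self (a : Z -> B) : nrm (seq_minus a a) = 0.
Proof.
  replace (seq_minus a a) with (@seq_zero B); [apply pl_norm_seq_zero|].
  apply functional_extensionality; intro n; symmetry; exact (minus_eq_zero (G := MB) (a n)).
Qed.

Lemma pl_norm_minus_sym (a b : Z -> B) : mem a -> mem b ->
  nrm (seq_minus a b) = nrm (seq_minus b a).
Proof.
  intros Ha Hb; replace (seq_minus a b) with (seq_scal (opp one) (seq_minus b a)).
  - rewrite pl_norm_scal by (apply pl_minus; auto).
    change (Cmod (- (1))%C * nrm (seq_minus b a) = nrm (seq_minus b a)).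
    rewrite Cmod_opp, Cmod_1; ring.
  - apply functional_extensionality; intro n; unfold seq_scal, seq_minus.
    rewrite (scal_opp_one (V := MB)); exact (opp_minus (G := MB) _ _).
Qed.

Lemma pl_norm_minus_triangle (a b c : Z -> B) : mem a -> mem b -> mem c ->
  nrm (seq_minus a c) <= nrm (seq_minus a b) + nrm (seq_minus b c).
Proof.
  intros Ha Hb Hc; replace (seq_minus a c) with (seq_plus (seq_minus a b) (seq_minus b c)).
  - apply pl_norm_triangle; apply pl_minus; auto.
  - apply functional_extensionality; intro n; symmetry.
    exact (minus_trans (G := MB) (b n) (a n) (c n)).
Qed.

End PseudolatticeNorm.

Section PseudolatticeFixpoint.
Variables (X : pseudolattice) (B : BanachC).
Local Notation mem := (pl_mem X B).
Local Notation nrm := (pl_norm X B).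
Variables (T : (Z -> B) -> Z -> B) (q : R).
Hypothesis hq : 0 <= q < 1.
Hypothesis T_mem : forall u, mem u -> mem (T u).
Hypothesis T_contr : forall u v, mem u -> mem v ->
  nrm (seq_minus (T u) (T v)) <= q * nrm (seq_minus u v).

Fixpoint iterate (n : nat) : Z -> B :=
  match n with O => seq_zero | S n => T (iterate n) end.

Lemma iterate_mem (n : nat) : mem (iterate n).
Proof. induction n as [|n IH]; [apply pl_zero | apply T_mem, IH]. Qed.

Lemma iterate_step (n : nat) :
  nrm (seq_minus (iterate (S n)) (iterate n)) <= q ^ n * nrm (T seq_zero).
Proof.
  induction n as [|n IH].
  - simpl; rewrite seq_minus_zero; lra.
  - apply Rle_trans with (q * nrm (seq_minus (iterate (S n)) (iterate n))).
    + apply (T_contr (iterate (S n)) (iterate n)); apply iterate_mem.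
    + simpl pow; rewrite Rmult_assoc; apply Rmult_le_compat_l; [lra | exact IH].
Qed.

Lemma iterate_dist (m n : nat) : (m <= n)%nat ->
  nrm (seq_minus (iterate n) (iterate m)) <= nrm (T seq_zero) * (q ^ m - q ^ n) / (1 - q).
Proof.
  intros Hmn; induction Hmn as [|n Hmn IH].
  - rewrite pl_norm_minus_self; apply Req_le; field; lra.
  - eapply Rle_trans; [apply (pl_norm_minus_triangle X B _ (iterate n)); apply iterate_mem|].
    pose proof (iterate_step n).
    replace (nrm (T seq_zero) * (q ^ m - q ^ S n) / (1 - q))
      with (q ^ n * nrm (T seq_zero) + nrm (T seq_zero) * (q ^ m - q ^ n) / (1 - q))
      by (simpl; field; lra).
    lra.
Qed.

Lemma iterate_dist_le (m n : nat) : (m <= n)%nat ->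
  nrm (seq_minus (iterate n) (iterate m)) <= nrm (T seq_zero) * q ^ m / (1 - q).
Proof.
  intros Hmn; eapply Rle_trans; [apply iterate_dist, Hmn|].
  pose proof (pow_le q n ltac:(lra)); pose proof (pl_norm_ge0 X B _ (T_mem _ (pl_zero X B))).
  unfold Rdiv; apply Rmult_le_compat_r; [left; apply Rinv_0_lt_compat; lra | nra].
Qed.

Definition iterate_limit (v : Z -> B) : Prop :=
  forall eps, 0 < eps -> exists N, forall p, (N <= p)%nat -> nrm (seq_minus (iterate p) v) < eps.

Lemma iterate_converges : exists v, mem v /\ iterate_limit v.
Proof.
  apply (pl_complete X B iterate iterate_mem); intros eps He.
  destruct (geom_eventually_small (nrm (T seq_zero) / (1 - q)) q eps hq He) as [N HN].
  exists N; intros m n Hm Hn; destruct (Nat.le_ge_cases m n) as [Hmn|Hnm].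
  - rewrite pl_norm_minus_sym by apply iterate_mem.
    eapply Rle_lt_trans; [apply iterate_dist_le, Hmn|]; specialize (HN m Hm); unfold Rdiv in *; lra.
  - eapply Rle_lt_trans; [apply iterate_dist_le, Hnm|]; specialize (HN n Hn); unfold Rdiv in *; lra.
Qed.

(* The limit is a fixed point: |T v - v| <= q |T^N 0 - v| + |T^(N+1) 0 - v| is arbitrarily small. *)
Lemma iterate_limit_fixed (v : Z -> B) : mem v -> iterate_limit v -> T v = v.
Proof.
  intros Hv Hlim.
  assert (Hsmall : forall eps, 0 < eps -> nrm (seq_minus (T v) v) < eps).
  { intros eps He; destruct (Hlim (eps / 2)) as [N HN]; [lra|].
    eapply Rle_lt_trans;
      [apply (pl_norm_minus_triangle X B _ (iterate (S N))); auto; apply iterate_mem|].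
    pose proof (T_contr v (iterate N) Hv (iterate_mem N)) as Hc.
    rewrite (pl_norm_minus_sym X B v) in Hc by (auto; apply iterate_mem).
    change (T (iterate N)) with (iterate (S N)) in Hc.
    pose proof (HN N (le_n N)); pose proof (HN (S N) ltac:(lia)).
    pose proof (pl_norm_ge0 X B _ (pl_minus X B _ _ (iterate_mem N) Hv)); nra. }
  assert (H0 : seq_minus (T v) v = seq_zero).
  { apply (pl_norm_eq0 X); [apply pl_minus; auto|].
    apply Rle_antisym; [|apply pl_norm_ge0, pl_minus; auto].
    apply Rnot_lt_le; intro Hpos; specialize (Hsmall _ Hpos); lra. }
  apply functional_extensionality; intro n; apply minus_eq_zero_inv; exact (equal_f H0 n).
Qed.

(* |v| <= |v - T^N 0| + |T^N 0| with |T^N 0| <= |T 0| / (1 - q). *)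
Lemma iterate_limit_norm (v : Z -> B) : mem v -> iterate_limit v ->
  nrm v <= nrm (T seq_zero) / (1 - q).
Proof.
  intros Hv Hlim; apply Rnot_lt_le; intro Hgt.
  destruct (Hlim (nrm v - nrm (T seq_zero) / (1 - q))) as [N HN]; [lra|].
  specialize (HN N (le_n N)).
  pose proof (pl_norm_minus_triangle X B v (iterate N) seq_zero Hv (iterate_mem N) (pl_zero X B))
    as Ht.
  rewrite !seq_minus_zero, pl_norm_minus_sym in Ht by (auto; apply iterate_mem).
  pose proof (iterate_dist_le 0 N ltac:(lia)) as Hd; simpl in Hd; rewrite seq_minus_zero in Hd.
  replace (nrm (T seq_zero) * 1 / (1 - q)) with (nrm (T seq_zero) / (1 - q)) in Hd by (field; lra).
  lra.
Qed.

Lemma pl_contraction_fixpoint :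
  exists v, mem v /\ T v = v /\ nrm v <= nrm (T seq_zero) / (1 - q).
Proof.
  destruct iterate_converges as [v [Hv Hlim]]; exists v.
  split; [exact Hv | split; [apply iterate_limit_fixed | apply iterate_limit_norm]; assumption].
Qed.

End PseudolatticeFixpoint.

(* In a translation invariant pseudolattice the shifted affine recurrence
   v_n = w a_(n+o) + q v_(n+d), |q| < 1, has a solution in X(B) with
   |v| <= |w| |a| / (1 - |q|): it is the fixed point of a contraction of ratio |q|. *)
Lemma pl_shift_recurrence (X : pseudolattice) (hX : translation_invariant X) (B : BanachC)
  (a : Z -> B) (w q : C) (o d : Z) : pl_mem X B a -> Cmod q < 1 ->
  exists v, pl_mem X B v /\ pl_norm X B v <= Cmod w / (1 - Cmod q) * pl_norm X B a /\
    forall n, v n = plus (scal (w : C_AbsRing) (a (n + o)%Z)) (scal (q : C_AbsRing) (v (n + d)%Z)).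
Proof.
  intros Ha Hq.
  (* Defs.shift is the translation of sequences (Coquelicot also exports a shift) *)
  set (T := fun u => seq_plus (seq_scal w (Defs.shift o a)) (seq_scal q (Defs.shift d u))).
  assert (Hshift : forall k u, pl_mem X B u ->
            pl_mem X B (Defs.shift k u) /\ pl_norm X B (Defs.shift k u) = pl_norm X B u)
    by (intros k u Hu; split; [apply (proj1 (hX B k u)) | apply (proj2 (hX B k u))]; exact Hu).
  assert (T0 : T seq_zero = seq_scal w (Defs.shift o a)).
  { apply functional_extensionality; intro n.
    exact (affine_zero (V := CompleteNormedModule.ModuleSpace _ B) _ _). }
  destruct (pl_contraction_fixpoint X B T (Cmod q)) as [v [Hv [Hfix Hnorm]]].
  - split; [apply Cmod_ge_0 | exact Hq].
  - intros u Hu; apply pl_plus; apply pl_scal, Hshift; assumption.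
  - intros u u' Hu Hu'.
    replace (seq_minus (T u) (T u')) with (seq_scal q (Defs.shift d (seq_minus u u'))).
    + rewrite pl_norm_scal, (proj2 (Hshift d _ (pl_minus X B _ _ Hu Hu'))); [lra|].
      apply Hshift, pl_minus; assumption.
    + apply functional_extensionality; intro n; symmetry.
      exact (affine_minus (V := CompleteNormedModule.ModuleSpace _ B) _ _ _ _).
  - exists v; split; [exact Hv | split].
    + rewrite T0, pl_norm_scal, (proj2 (Hshift o a Ha)) in Hnorm by apply Hshift, Ha.
      replace (Cmod w / (1 - Cmod q) * pl_norm X B a) with (Cmod w * pl_norm X B a / (1 - Cmod q))
        by (field; lra); exact Hnorm.
    + intro n; exact (eq_sym (equal_f Hfix n)).
Qed.

Lemma recurrence_inversion {V : ModuleSpace C_AbsRing} (F G G' : V) (s : C) : s <> 0%C ->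
  G' = plus (scal ((- / s)%C : C_AbsRing) F) (scal ((/ s)%C : C_AbsRing) G) ->
  G = plus F (scal (s : C_AbsRing) G').
Proof.
  intros Hs ->; rewrite scal_distr_l, !scal_assoc.
  replace (mult (s : C_AbsRing) (- / s)%C)
    with (@opp (Ring.AbelianGroup (AbsRing.Ring C_AbsRing)) (@one (AbsRing.Ring C_AbsRing)))
    by (change (- (1) = s * - / s)%C; field; exact Hs).
  replace (mult (s : C_AbsRing) (/ s)%C) with (one : C_AbsRing)
    by (change (RtoC 1 = (s * / s)%C); field; exact Hs).
  rewrite scal_opp_one, scal_one, plus_assoc, (plus_opp_r (G := ModuleSpace.AbelianGroup _ V)).
  rewrite plus_zero_l; reflexivity.
Qed.

(* The coefficients of f(z) / (z - s) solved downwards in B0: g_n = - sum_k s^(-k-1) f_(n-k),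
   a solution of g_(m-1) = f_m + s g_m in X0(B0) with |g| <= (|s| - 1)^(-1) |f|. *)
Lemma downward_solution (X0 : pseudolattice) (hX0 : translation_invariant X0) (cp : couple)
  (fa : Z -> cB0 cp) (s : C) : pl_mem X0 (cB0 cp) fa -> 1 < Cmod s ->
  exists ga, pl_mem X0 (cB0 cp) ga /\
    pl_norm X0 (cB0 cp) ga <= / (Cmod s - 1) * pl_norm X0 (cB0 cp) fa /\
    forall m, i0 cp (ga (m - 1)%Z) = plus (i0 cp (fa m)) (scal (s : C_AbsRing) (i0 cp (ga m))).
Proof.
  intros Hfa Hs.
  assert (Hs0 : s <> 0%C) by (intro E; rewrite E, Cmod_0 in Hs; lra).
  assert (Hinv : Cmod (/ s) = / Cmod s) by (apply Cmod_inv, Hs0).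
  destruct (pl_shift_recurrence X0 hX0 (cB0 cp) fa (- / s)%C (/ s)%C 0 (-1) Hfa)
    as [ga [Hmem [Hnorm Hrec]]].
  { rewrite Hinv; apply inv_gt_1, Hs. }
  exists ga; split; [exact Hmem | split].
  - rewrite Cmod_opp, Hinv in Hnorm.
    replace (/ Cmod s / (1 - / Cmod s)) with (/ (Cmod s - 1)) in Hnorm by (field; lra).
    exact Hnorm.
  - intro m; apply recurrence_inversion; [exact Hs0|].
    rewrite (Hrec m), i0_plus, !i0_scal, Z.add_0_r; reflexivity.
Qed.

Lemma scal_exp_cancel {V : ModuleSpace C_AbsRing} (t : R) (x : V) :
  scal (RtoC (exp (- t)) : C_AbsRing) (scal (RtoC (exp t) : C_AbsRing) x) = x.
Proof.
  rewrite scal_assoc; change (mult _ _) with (RtoC (exp (- t)) * RtoC (exp t))%C.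
  rewrite <- RtoC_mult, <- exp_plus, Rplus_opp_l, exp_0; apply (scal_one x).
Qed.

Lemma eweight_coord (X : pseudolattice) (B : BanachC) (c : Z -> B) :
  pl_mem X B (eweight c) -> forall n, norm (c n) <= pl_norm X B (eweight c) * exp (- IZR n).
Proof.
  intros Hc n.
  replace (c n) with (scal (RtoC (exp (- IZR n)) : C_AbsRing) (eweight c n))
    by exact (scal_exp_cancel (V := CompleteNormedModule.ModuleSpace _ B) (IZR n) (c n)).
  eapply Rle_trans; [apply Bnorm_scal|].
  rewrite Cmod_R, Rabs_pos_eq, Rmult_comm by (left; apply exp_pos).
  apply Rmult_le_compat_r; [left; apply exp_pos | apply (pl_coord X), Hc].
Qed.

(* The factors relating the recurrences for g_n and for e^n g_n. *)
Lemma weight_coefficients (m : Z) (s : C) :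
  (RtoC (exp (- IZR (m - 1))) * / RtoC (exp 1) * RtoC (exp (IZR m)))%C = RtoC 1 /\
  (RtoC (exp (- IZR (m - 1))) * (s * / RtoC (exp 1)))%C = (s * RtoC (exp (- IZR m)))%C.
Proof.
  pose proof (exp_pos 1) as He.
  assert (He0 : RtoC (exp 1) <> 0%C) by (intro E; apply RtoC_inj in E; lra).
  assert (Eexp : exp (- IZR (m - 1)) = exp 1 * exp (- IZR m))
    by (rewrite minus_IZR, <- exp_plus; f_equal; ring).
  split.
  - rewrite <- RtoC_inv, <- !RtoC_mult by lra; f_equal.
    rewrite Eexp; replace (exp 1 * exp (- IZR m) * / exp 1 * exp (IZR m))
      with (exp (- IZR m + IZR m) * (exp 1 * / exp 1)) by (rewrite exp_plus; ring).
    rewrite Rplus_opp_l, exp_0, Rinv_r by lra; ring.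
  - rewrite Eexp, RtoC_mult; field; exact He0.
Qed.

(* The coefficients of f(z) / (z - s) solved upwards in B1: g_n = sum_k s^k f_(n+1+k), a solution
   of g_(m-1) = f_m + s g_m with |e^n g_n| <= (e - |s|)^(-1) |e^n f_n| in X1(B1). It is the
   weighted sequence e^n g_n which solves a recurrence of the form of pl_shift_recurrence. *)
Lemma upward_solution (X1 : pseudolattice) (hX1 : translation_invariant X1) (cp : couple)
  (fa : Z -> cB0 cp) (fc : Z -> cB1 cp) (s : C) :
  (forall n, i0 cp (fa n) = i1 cp (fc n)) -> pl_mem X1 (cB1 cp) (eweight fc) -> Cmod s < exp 1 ->
  exists gc, pl_mem X1 (cB1 cp) (eweight gc) /\
    pl_norm X1 (cB1 cp) (eweight gc) <= / (exp 1 - Cmod s) * pl_norm X1 (cB1 cp) (eweight fc) /\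
    forall m, i1 cp (gc (m - 1)%Z) = plus (i0 cp (fa m)) (scal (s : C_AbsRing) (i1 cp (gc m))).
Proof.
  intros Hfac Hfc Hs; pose proof (exp_pos 1) as He.
  assert (He0 : RtoC (exp 1) <> 0%C) by (intro E; apply RtoC_inj in E; lra).
  assert (Hinv : Cmod (/ RtoC (exp 1)) = / exp 1)
    by (rewrite Cmod_inv, Cmod_R, Rabs_pos_eq by (auto; lra); reflexivity).
  destruct (pl_shift_recurrence X1 hX1 (cB1 cp) (eweight fc) (/ RtoC (exp 1))%C
    (s * / RtoC (exp 1))%C 1 1 Hfc) as [v [Hmem [Hnorm Hrec]]].
  { rewrite Cmod_mult, Hinv; apply Rmult_lt_reg_r with (exp 1); [lra|]; field_simplify; lra. }
  set (gc := fun n : Z => scal (RtoC (exp (- IZR n)) : C_AbsRing) (v n)).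
  assert (Hgc : eweight gc = v).
  { apply functional_extensionality; intro n; unfold eweight, gc.
    rewrite <- (Ropp_involutive (IZR n)) at 1.
    exact (scal_exp_cancel (V := CompleteNormedModule.ModuleSpace _ (cB1 cp)) _ (v n)). }
  exists gc; rewrite Hgc; split; [exact Hmem | split].
  - rewrite Cmod_mult, Hinv in Hnorm.
    replace (/ exp 1 / (1 - Cmod s * / exp 1)) with (/ (exp 1 - Cmod s)) in Hnorm by (field; lra).
    exact Hnorm.
  - intro m; unfold gc; rewrite Hfac, !i1_scal, (Hrec (m - 1)%Z), Z.sub_add; unfold eweight.
    rewrite i1_plus, !i1_scal, scal_distr_l, !scal_assoc.
    destruct (weight_coefficients m s) as [E1 E2]; f_equal.
    + rewrite <- (scal_one (i1 cp (fc m))) at 2; f_equal; exact E1.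
    + f_equal; exact E2.
Qed.

Definition pos_terms {V : ModuleSpace C_AbsRing} (z : C) (h : Z -> V) (n : nat) : V :=
  scal (zpowC z (Z.of_nat n) : C_AbsRing) (h (Z.of_nat n)).
Definition neg_terms {V : ModuleSpace C_AbsRing} (z : C) (h : Z -> V) (n : nat) : V :=
  scal (zpowC z (- Z.of_nat (S n)) : C_AbsRing) (h (- Z.of_nat (S n))%Z).

Lemma zpowC_succ (z : C) (n : nat) : zpowC z (Z.of_nat (S n)) = (z * zpowC z (Z.of_nat n))%C.
Proof. rewrite !zpowC_nat; reflexivity. Qed.

Lemma zpowC_neg_succ (z : C) (n : nat) : z <> 0%C ->
  (z * zpowC z (- Z.of_nat (S (S n))))%C = zpowC z (- Z.of_nat (S n)).
Proof.
  intro Hz; rewrite !zpowC_neg; change ((/ z) ^ S (S n))%C with (/ z * (/ z) ^ S n)%C.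
  field; exact Hz.
Qed.

Lemma telescope_sum {M : AbelianMonoid} (a b c : nat -> M) (d : M) :
  plus (a 0%nat) (b 0%nat) = plus (c 0%nat) d ->
  (forall n, plus (a (S n)) (b (S n)) = plus (c (S n)) (b n)) ->
  forall N, plus (sum_n a N) (b N) = plus (sum_n c N) d.
Proof.
  intros H0 HS N; induction N as [|N IH]; [rewrite !sum_O; exact H0|].
  rewrite !sum_Sn, <- plus_assoc, HS, (plus_comm (c (S N))), plus_assoc, IH.
  rewrite <- !plus_assoc, (plus_comm d); reflexivity.
Qed.

Lemma scal_zpowC_0 {V : ModuleSpace C_AbsRing} (z : C) (x : V) : scal (zpowC z 0 : C_AbsRing) x = x.
Proof. exact (scal_one x). Qed.

Section Telescoping.
Context {V : ModuleSpace C_AbsRing}.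
Variables (F G : Z -> V) (s z : C).
Hypothesis hrec : forall m, G (m - 1)%Z = plus (F m) (scal (s : C_AbsRing) (G m)).

Lemma scal_pair_eq (a b a' b' : C) (x y : V) : a = a' -> b = b' ->
  plus (scal (a : C_AbsRing) x) (scal (b : C_AbsRing) y) =
  plus (scal (a' : C_AbsRing) x) (scal (b' : C_AbsRing) y).
Proof. intros -> ->; reflexivity. Qed.

Lemma telescope_pos (N : nat) :
  plus (sum_n (pos_terms z F) N) (scal (z : C_AbsRing) (pos_terms z G N)) =
  plus (scal ((z - s)%C : C_AbsRing) (sum_n (pos_terms z G) N)) (G (-1)%Z).
Proof.
  rewrite <- sum_n_scal_l.
  apply (telescope_sum _ (fun n => scal (z : C_AbsRing) (pos_terms z G n))).
  - unfold pos_terms; simpl Z.of_nat.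
    rewrite (hrec 0%Z : G (-1)%Z = _), !scal_zpowC_0.
    rewrite plus_comm, (plus_comm (F 0%Z)), plus_assoc, <- scal_distr_r; f_equal.
    f_equal; change (z = z - s + s)%C; ring.
  - intro n; unfold pos_terms.
    replace (G (Z.of_nat n)) with (G (Z.of_nat (S n) - 1)%Z) by (f_equal; lia).
    rewrite hrec, !scal_distr_l, !scal_assoc.
    rewrite plus_assoc, (plus_comm (scal _ (G (Z.of_nat (S n))))), <- plus_assoc, <- scal_distr_r.
    apply scal_pair_eq; rewrite zpowC_succ; unfold mult, plus; simpl; ring.
Qed.

Lemma telescope_neg (N : nat) : z <> 0%C ->
  plus (scal ((z - s)%C : C_AbsRing) (sum_n (neg_terms z G) N))
       (scal (z : C_AbsRing) (neg_terms z G (S N))) =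
  plus (sum_n (neg_terms z F) N) (G (-1)%Z).
Proof.
  intro Hz; rewrite <- sum_n_scal_l.
  apply (telescope_sum _ (fun n => scal (z : C_AbsRing) (neg_terms z G (S n))));
    intros; unfold neg_terms.
  - change (- Z.of_nat 1)%Z with (-1)%Z.
    rewrite (hrec (-1)%Z : G (- Z.of_nat 2)%Z = _), !scal_distr_l, !scal_assoc.
    rewrite plus_assoc, (plus_comm (scal _ (G (-1)%Z))), <- plus_assoc, <- scal_distr_r.
    etransitivity; [|apply (f_equal (plus _)), (scal_one (G (-1)%Z))].
    apply scal_pair_eq; simpl; unfold mult, plus, one; simpl; field; exact Hz.
  - replace (G (- Z.of_nat (S (S (S n))))%Z) with (G (- Z.of_nat (S (S n)) - 1)%Z)
      by (f_equal; lia).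
    rewrite hrec, !scal_distr_l, !scal_assoc, plus_assoc.
    rewrite (plus_comm (scal _ (G (- Z.of_nat (S (S n)))%Z))), <- plus_assoc, <- scal_distr_r.
    apply scal_pair_eq; rewrite <- (zpowC_neg_succ z (S n) Hz); unfold mult, plus; simpl; ring.
Qed.
End Telescoping.

Lemma recurrence_agree {V : ModuleSpace C_AbsRing} (F G G' : Z -> V) (s : C) (k : Z) : s <> 0%C ->
  (forall m, G (m - 1)%Z = plus (F m) (scal (s : C_AbsRing) (G m))) ->
  (forall m, G' (m - 1)%Z = plus (F m) (scal (s : C_AbsRing) (G' m))) ->
  G k = G' k -> forall m, G m = G' m.
Proof.
  intros Hs HG HG' Hk.
  assert (Hup : forall m, G (m - 1)%Z = G' (m - 1)%Z -> G m = G' m).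
  { intros m E; rewrite HG, HG' in E; apply (plus_reg_l (G := ModuleSpace.AbelianGroup _ V)) in E.
    rewrite <- (scal_one (G m)), <- (scal_one (G' m)).
    replace (one : C_AbsRing) with (mult ((/ s)%C : C_AbsRing) s)
      by (change (/ s * s = RtoC 1)%C; field; exact Hs).
    rewrite <- !scal_assoc, E; reflexivity. }
  assert (Hshift : forall j, G (j + k)%Z = G' (j + k)%Z).
  { intro j; induction j as [|j IH|j IH] using Z.peano_ind.
    - exact Hk.
    - apply Hup; replace (Z.succ j + k - 1)%Z with (j + k)%Z by lia; exact IH.
    - replace (Z.pred j + k)%Z with (j + k - 1)%Z by lia; rewrite HG, HG', IH; reflexivity. }
  intro m; replace m with (m - k + k)%Z by lia; apply Hshift.
Qed.

Section LaurentParts.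
Context {V : NormedModule C_AbsRing}.

Lemma norm_scal_C (l : C) (x : V) : norm (scal (l : C_AbsRing) x) <= Cmod l * norm x.
Proof. exact (norm_scal l x). Qed.

Lemma pos_terms_bound (c : Z -> V) (M R : R) (z : C) : 0 < R ->
  (forall n : nat, norm (c (Z.of_nat n)) <= M * (/ R) ^ n) ->
  forall n, norm (pos_terms z c n) <= M * (Cmod z / R) ^ n.
Proof.
  intros HR Hc n; unfold pos_terms; eapply Rle_trans; [apply norm_scal_C|].
  rewrite zpowC_nat, Cmod_pow; unfold Rdiv; rewrite Rpow_mult_distr.
  pose proof (pow_le (Cmod z) n (Cmod_ge_0 z)); specialize (Hc n).
  replace (M * (Cmod z ^ n * (/ R) ^ n)) with (Cmod z ^ n * (M * (/ R) ^ n)) by ring.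
  apply Rmult_le_compat_l; assumption.
Qed.

Lemma neg_terms_bound (c : Z -> V) (M : R) (z : C) : z <> 0%C ->
  (forall n, norm (c n) <= M) -> forall n, norm (neg_terms z c n) <= M * (/ Cmod z) ^ S n.
Proof.
  intros Hz Hc n; unfold neg_terms; eapply Rle_trans; [apply norm_scal_C|].
  rewrite zpowC_neg, Cmod_pow, Cmod_inv by exact Hz.
  pose proof (pow_le (/ Cmod z) (S n) (Rlt_le _ _ (Rinv_0_lt_compat _ (proj1 (Cmod_gt_0 z) Hz)))).
  rewrite Rmult_comm; apply Rmult_le_compat_r; auto.
Qed.

Lemma pos_terms_minus (c : Z -> V) (w z : C) (n : nat) :
  plus (pos_terms w c n) (opp (pos_terms z c n)) =
  scal ((zpowC w (Z.of_nat n) - zpowC z (Z.of_nat n))%C : C_AbsRing) (c (Z.of_nat n)).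
Proof. unfold pos_terms; symmetry; exact (scal_minus_distr_r _ _ _). Qed.

Lemma neg_terms_minus (c : Z -> V) (w z : C) (n : nat) :
  plus (neg_terms w c n) (opp (neg_terms z c n)) =
  scal ((zpowC w (- Z.of_nat (S n)) - zpowC z (- Z.of_nat (S n)))%C : C_AbsRing)
    (c (- Z.of_nat (S n))%Z).
Proof. unfold neg_terms; symmetry; exact (scal_minus_distr_r _ _ _). Qed.

Lemma pos_series_lipschitz (c : Z -> V) (M R r : R) : 0 < R -> 0 <= r < 1 ->
  (forall n : nat, norm (c (Z.of_nat n)) <= M * (/ R) ^ n) ->
  exists L, 0 <= L /\ forall (w z : C) (lw lz : V), Cmod w <= r * R -> Cmod z <= r * R ->
    is_series (pos_terms w c) lw -> is_series (pos_terms z c) lz ->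
    norm (minus lw lz) <= L * Cmod (w - z)%C.
Proof.
  intros HR Hr Hc.
  assert (HM : 0 <= M) by (specialize (Hc 0%nat); simpl in Hc; pose proof (norm_ge_0 (c 0%Z)); lra).
  destruct (Cpow_lipschitz r Hr) as [K [HK HLip]]; set (rho := (1 + r) / 2).
  exists (M * K / R / (1 - rho)); split.
  { apply Rdiv_le_0_compat; [apply Rdiv_le_0_compat|]; unfold rho; try nra; lra. }
  intros w z lw lz Hw Hz Hlw Hlz.
  replace (M * K / R / (1 - rho) * Cmod (w - z)%C) with (M * K / R * Cmod (w - z)%C / (1 - rho))
    by (unfold rho; field; lra).
  apply (is_series_norm_geom (fun n => plus (pos_terms w c n) (opp (pos_terms z c n))) _ _ rho);
    [unfold rho; lra | | exact (is_series_minus _ _ _ _ Hlw Hlz)].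
  intro n; rewrite pos_terms_minus; eapply Rle_trans; [apply norm_scal_C|].
  assert (HR0 : RtoC R <> 0%C) by (intro E; apply RtoC_inj in E; lra).
  assert (Hscale : forall a : C, Cmod a <= r * R -> Cmod (a / R)%C <= r).
  { intros a Ha; unfold Cdiv; rewrite Cmod_mult, Cmod_inv, Cmod_R, Rabs_pos_eq by (auto; lra).
    apply Rmult_le_reg_r with R; [lra|]; field_simplify; lra. }
  (* |w^n - z^n| R^(-n) = |(w/R)^n - (z/R)^n| <= K |w - z| / R rho^n *)
  assert (E : Cmod (w ^ n - z ^ n)%C * (/ R) ^ n = Cmod ((w / R) ^ n - (z / R) ^ n)%C).
  { unfold Cdiv; rewrite !Cpow_mult_l.
    replace (w ^ n * (/ R) ^ n - z ^ n * (/ R) ^ n)%C with ((w ^ n - z ^ n) * (/ R) ^ n)%C by ring.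
    rewrite Cmod_mult, Cmod_pow, Cmod_inv, Cmod_R, Rabs_pos_eq by (auto; lra); reflexivity. }
  pose proof (HLip (w / R)%C (z / R)%C n (Hscale w Hw) (Hscale z Hz)) as Hd.
  replace ((w / R) - (z / R))%C with ((w - z) / R)%C in Hd by (field; exact HR0).
  unfold Cdiv at 3 in Hd; rewrite Cmod_mult, Cmod_inv, Cmod_R, Rabs_pos_eq in Hd by (auto; lra).
  rewrite !zpowC_nat; pose proof (Cmod_ge_0 (w ^ n - z ^ n)%C); specialize (Hc n).
  apply Rle_trans with (M * (Cmod (w ^ n - z ^ n)%C * (/ R) ^ n)).
  - rewrite (Rmult_comm M), Rmult_assoc; apply Rmult_le_compat_l; [assumption|].
    rewrite Rmult_comm; assumption.
  - rewrite E; apply Rle_trans with (M * (K * (Cmod (w - z)%C * / R) * rho ^ n));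
      [apply Rmult_le_compat_l; assumption | right; unfold Rdiv; ring].
Qed.

Lemma neg_series_lipschitz (c : Z -> V) (M r : R) : 1 < r -> (forall n, norm (c n) <= M) ->
  exists L, 0 <= L /\ forall (w z : C) (lw lz : V), r <= Cmod w -> r <= Cmod z ->
    is_series (neg_terms w c) lw -> is_series (neg_terms z c) lz ->
    norm (minus lw lz) <= L * Cmod (w - z)%C.
Proof.
  intros Hr Hc; pose proof (Hc 0%Z) as HM; pose proof (norm_ge_0 (c 0%Z)).
  assert (Hr' : 0 <= / r < 1) by (pose proof (inv_gt_1 r Hr); lra).
  destruct (Cpow_lipschitz (/ r) Hr') as [K [HK HLip]]; set (rho := (1 + / r) / 2).
  assert (Hrho : 0 < rho < 1) by (unfold rho; lra).
  exists (M * K / (1 - rho)); split; [apply Rdiv_le_0_compat; nra|].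
  intros w z lw lz Hw Hz Hlw Hlz.
  assert (Hw0 : w <> 0%C) by (intro E; rewrite E, Cmod_0 in Hw; lra).
  assert (Hz0 : z <> 0%C) by (intro E; rewrite E, Cmod_0 in Hz; lra).
  assert (Hinv : forall a : C, r <= Cmod a -> Cmod (/ a) <= / r).
  { intros a Ha; rewrite Cmod_inv by (intro E; rewrite E, Cmod_0 in Ha; lra).
    apply Rinv_le_contravar; lra. }
  assert (Hd : Cmod (/ w - / z)%C <= Cmod (w - z)%C).
  { replace (/ w - / z)%C with ((w - z) * (- / (w * z)))%C by (field; auto).
    rewrite Cmod_mult, Cmod_opp, Cmod_inv, Cmod_mult by (apply Cmult_neq_0; auto).
    pose proof (Cmod_ge_0 (w - z)%C).
    assert (/ (Cmod w * Cmod z) <= 1) by (rewrite <- Rinv_1; apply Rinv_le_contravar; nra).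
    assert (0 <= / (Cmod w * Cmod z)) by (left; apply Rinv_0_lt_compat; nra). nra. }
  replace (M * K / (1 - rho) * Cmod (w - z)%C) with (M * K * Cmod (w - z)%C / (1 - rho))
    by (field; lra).
  apply (is_series_norm_geom (fun n => plus (neg_terms w c n) (opp (neg_terms z c n))) _ _ rho);
    [lra | | exact (is_series_minus _ _ _ _ Hlw Hlz)].
  intro n; rewrite neg_terms_minus, !zpowC_neg; eapply Rle_trans; [apply norm_scal_C|].
  pose proof (HLip (/ w)%C (/ z)%C (S n) (Hinv w Hw) (Hinv z Hz)) as Hpow.
  fold rho in Hpow; specialize (Hc (- Z.of_nat (S n))%Z).
  pose proof (pow_le rho n ltac:(lra)); pose proof (Cmod_ge_0 (/ w - / z)%C).
  apply Rle_trans with (K * Cmod (/ w - / z)%C * rho ^ S n * M);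
    [apply Rmult_le_compat; auto; [apply Cmod_ge_0 | apply norm_ge_0]|].
  assert (Hstep : rho ^ S n <= rho ^ n) by (simpl; nra).
  apply Rle_trans with (K * Cmod (w - z)%C * rho ^ n * M); [|right; ring].
  apply Rmult_le_compat_r; [lra|]; pose proof (pow_le rho (S n) ltac:(lra)).
  apply Rmult_le_compat; [apply Rmult_le_pos; auto | auto | apply Rmult_le_compat_l; auto | auto].
Qed.

End LaurentParts.

Lemma ex_series_pos_terms {V : CompleteNormedModule C_AbsRing} (c : Z -> V) (M R : R) (z : C) :
  0 < R -> (forall n : nat, norm (c (Z.of_nat n)) <= M * (/ R) ^ n) -> Cmod z < R ->
  ex_series (pos_terms z c).
Proof.
  intros HR Hc Hz; apply (ex_series_geom_bound _ M (Cmod z / R)).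
  - split; [apply Rdiv_le_0_compat; [apply Cmod_ge_0 | lra]|].
    apply Rmult_lt_reg_r with R; [lra|]; field_simplify; lra.
  - exact (pos_terms_bound (V := CompleteNormedModule.NormedModule _ V) c M R z HR Hc).
Qed.

Lemma ex_series_neg_terms {V : CompleteNormedModule C_AbsRing} (c : Z -> V) (M : R) (z : C) :
  (forall n, norm (c n) <= M) -> 1 < Cmod z -> ex_series (neg_terms z c).
Proof.
  intros Hc Hz; assert (Hz0 : z <> 0%C) by (intro E; rewrite E, Cmod_0 in Hz; lra).
  assert (Hq : 0 <= / Cmod z < 1) by (pose proof (inv_gt_1 (Cmod z) Hz); lra).
  apply (ex_series_geom_bound _ (M * / Cmod z) (/ Cmod z) Hq); intro n.
  eapply Rle_trans;
    [exact (neg_terms_bound (V := CompleteNormedModule.NormedModule _ V) c M z Hz0 Hc n)|].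
  right; simpl; ring.
Qed.

Section LaurentSumSpace.
Variable cp : couple.

Lemma Kconv_i0_zero (u : nat -> cB0 cp) :
  (forall eps, 0 < eps -> exists N, forall n, (N <= n)%nat -> norm (u n) < eps) ->
  Kconv cp (fun n => i0 cp (u n)) zero.
Proof.
  intro H; rewrite <- (i0_zero cp); apply Kconv_i0; intros eps He.
  destruct (H eps He) as [N HN]; exists N; intros n Hn.
  rewrite Bnorm_minus_sym, (minus_zero_r (G := CompleteNormedModule.AbelianGroup _ (cB0 cp))).
  apply HN, Hn.
Qed.

Lemma Kconv_i1_zero (u : nat -> cB1 cp) :
  (forall eps, 0 < eps -> exists N, forall n, (N <= n)%nat -> norm (u n) < eps) ->
  Kconv cp (fun n => i1 cp (u n)) zero.
Proof.
  intro H; rewrite <- (i1_zero cp); apply Kconv_i1; intros eps He.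
  destruct (H eps He) as [N HN]; exists N; intros n Hn.
  rewrite Bnorm_minus_sym, (minus_zero_r (G := CompleteNormedModule.AbelianGroup _ (cB1 cp))).
  apply HN, Hn.
Qed.

Lemma pos_terms_i1 (z : C) (c : Z -> cB1 cp) (n : nat) :
  pos_terms z (fun m => i1 cp (c m)) n = i1 cp (pos_terms z c n).
Proof. unfold pos_terms; rewrite i1_scal; reflexivity. Qed.

Lemma neg_terms_i0 (z : C) (c : Z -> cB0 cp) (n : nat) :
  neg_terms z (fun m => i0 cp (c m)) n = i0 cp (neg_terms z c n).
Proof. unfold neg_terms; rewrite i0_scal; reflexivity. Qed.

Lemma Kseries_pos_i1 (z : C) (c : Z -> cB1 cp) (l : cB1 cp) :
  is_series (pos_terms z c) l -> Kseries cp (pos_terms z (fun m => i1 cp (c m))) (i1 cp l).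
Proof.
  intro H; apply (Kconv_ext cp (sum_n (fun n => i1 cp (pos_terms z c n))));
    [|exact (Kseries_i1 cp _ _ H)].
  intro N; apply sum_n_ext; intro n; symmetry; apply pos_terms_i1.
Qed.

Lemma Kseries_neg_i0 (z : C) (c : Z -> cB0 cp) (l : cB0 cp) :
  is_series (neg_terms z c) l -> Kseries cp (neg_terms z (fun m => i0 cp (c m))) (i0 cp l).
Proof.
  intro H; apply (Kconv_ext cp (sum_n (fun n => i0 cp (neg_terms z c n))));
    [|exact (Kseries_i0 cp _ _ H)].
  intro N; apply sum_n_ext; intro n; symmetry; apply neg_terms_i0.
Qed.

Lemma pos_remainder_vanish (z : C) (c : Z -> cB1 cp) (l : cB1 cp) :
  is_series (pos_terms z c) l ->
  Kconv cp (fun N => scal (z : C_AbsRing) (pos_terms z (fun m => i1 cp (c m)) N)) zero.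
Proof.
  intro H; rewrite <- (scal_zero_r (z : C_AbsRing)); apply Kconv_scal.
  apply (Kconv_ext cp (fun N => i1 cp (pos_terms z c N))); [intro; symmetry; apply pos_terms_i1|].
  apply Kconv_i1_zero.
  exact (is_series_terms_vanish (V := CompleteNormedModule.NormedModule _ (cB1 cp)) _ _ H).
Qed.

Lemma neg_remainder_vanish (z : C) (c : Z -> cB0 cp) (l : cB0 cp) :
  is_series (neg_terms z c) l ->
  Kconv cp (fun N => scal (z : C_AbsRing) (neg_terms z (fun m => i0 cp (c m)) (S N))) zero.
Proof.
  intro H; rewrite <- (scal_zero_r (z : C_AbsRing)); apply Kconv_scal.
  apply (Kconv_ext cp (fun N => i0 cp (neg_terms z c (S N))));
    [intro; symmetry; apply neg_terms_i0|].
  apply Kconv_i0_zero; intros eps He.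
  destruct (is_series_terms_vanish (V := CompleteNormedModule.NormedModule _ (cB0 cp)) _ _ H eps He)
    as [N HN].
  exists N; intros n Hn; apply HN; lia.
Qed.

End LaurentSumSpace.

Lemma Klt_cancel_factor (cp : couple) (a : C) (x y : cU cp) (r : R) : a <> 0%C ->
  Klt cp (minus (scal (a : C_AbsRing) x) (scal (a : C_AbsRing) y)) r ->
  Klt cp (minus x y) ((/ Cmod a + 1) * r).
Proof.
  intros Ha H; rewrite <- (Cmod_inv a Ha); apply (Klt_scal cp (/ a)%C) in H.
  rewrite <- scal_minus_distr_l, scal_assoc in H.
  replace (mult ((/ a)%C : C_AbsRing) a) with (one : C_AbsRing) in H
    by (change (RtoC 1 = / a * a)%C; field; exact Ha).
  rewrite scal_one in H; exact H.
Qed.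

Lemma Kderiv_factor (cp : couple) (f : C -> cU cp) (s : C) (l y : cU cp) (L rad : R) :
  Kderiv cp f s l -> f s = zero -> 0 < rad -> 0 <= L ->
  (forall w, w <> s -> Cmod (w - s)%C < rad -> exists yw,
     f w = scal ((w - s)%C : C_AbsRing) yw /\ Klt cp (minus y yw) (L * Cmod (w - s)%C)) ->
  y = l.
Proof.
  intros Hd Hfs Hrad HL Hfac; apply minus_eq_zero_inv, (Klt_all_zero cp); intros eps He.
  destruct (Hd (eps / 4)) as [del [Hdel Hdiff]]; [lra|].
  set (d := Rmin (Rmin del rad) (Rmin 1 (eps / (4 * (L + 1)))) / 2).
  assert (Hd0 : 0 < d).
  { unfold d; apply Rdiv_lt_0_compat; [|lra].
    repeat apply Rmin_pos; try lra; apply Rdiv_lt_0_compat; lra. }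
  assert (Hdb : d < del /\ d < rad /\ d <= 1 /\ d <= eps / (4 * (L + 1))).
  { unfold d; pose proof (Rmin_l del rad); pose proof (Rmin_r del rad).
    pose proof (Rmin_l 1 (eps / (4 * (L + 1)))); pose proof (Rmin_r 1 (eps / (4 * (L + 1)))).
    pose proof (Rmin_l (Rmin del rad) (Rmin 1 (eps / (4 * (L + 1))))).
    pose proof (Rmin_r (Rmin del rad) (Rmin 1 (eps / (4 * (L + 1))))).
    assert (0 < eps / (4 * (L + 1))) by (apply Rdiv_lt_0_compat; lra).
    repeat split; lra. }
  destruct Hdb as [Hdel' [Hrad' [Hd1 HdL]]].
  set (w := (s + RtoC d)%C).
  assert (Hws : (w - s)%C = RtoC d) by (unfold w; ring).
  assert (Hwsm : Cmod (w - s)%C = d) by (rewrite Hws, Cmod_R, Rabs_pos_eq; lra).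
  assert (Hwne : w <> s)
    by (intro E; rewrite E in Hwsm; replace (s - s)%C with (RtoC 0) in Hwsm by ring;
        rewrite Cmod_0 in Hwsm; lra).
  destruct (Hfac w Hwne ltac:(lra)) as [yw [Hfw Hy]].
  (* the difference quotient (f(w) - f(s)) / (w - s) - l equals y_w - l *)
  specialize (Hdiff w ltac:(lra) Hwne); rewrite Hfw, Hfs in Hdiff.
  rewrite (minus_zero_r (G := ModuleSpace.AbelianGroup _ (cU cp))) in Hdiff.
  apply Klt_cancel_factor in Hdiff; [|rewrite Hws; intro E; apply RtoC_inj in E; lra].
  rewrite Hwsm in Hdiff.
  rewrite (minus_trans yw); replace eps with (L * d + (eps - L * d)) by ring.
  apply Klt_plus; [rewrite <- Hwsm; exact Hy|].
  eapply Klt_mono; [|exact Hdiff].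
  assert (L * d <= eps / 4).
  { apply Rle_trans with ((L + 1) * (eps / (4 * (L + 1)))); [nra | right; field; lra]. }
  replace ((/ d + 1) * (eps / 4 * d)) with (eps / 4 * (1 + d)) by (field; lra). nra.
Qed.

Definition annulus_radius (s : C) : R := Rmin ((exp 1 - Cmod s) / 2) ((Cmod s - 1) / 2).

Lemma annulus_radius_spec (s : C) : inA s -> 0 < annulus_radius s /\
  forall w, Cmod (w - s)%C < annulus_radius s -> (1 + Cmod s) / 2 <= Cmod w <= (Cmod s + exp 1) / 2.
Proof.
  intros [Hs1 Hs2]; unfold annulus_radius; split; [apply Rmin_pos; lra|].
  intros w Hw; pose proof (Rmin_l ((exp 1 - Cmod s) / 2) ((Cmod s - 1) / 2)).
  pose proof (Rmin_r ((exp 1 - Cmod s) / 2) ((Cmod s - 1) / 2)).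
  assert (Cmod w <= Cmod s + Cmod (w - s)%C)
    by (replace w with (s + (w - s))%C at 1 by ring; apply Cmod_triangle).
  assert (Cmod s <= Cmod w + Cmod (w - s)%C).
  { replace s with (w + - (w - s))%C at 1 by ring.
    rewrite <- (Cmod_opp (w - s)%C); apply Cmod_triangle. }
  lra.
Qed.

Lemma annulus_radius_inA (s w : C) : inA s -> Cmod (w - s)%C < annulus_radius s -> inA w.
Proof.
  intros hs Hw; pose proof hs as [Hs1 Hs2]; destruct (annulus_radius_spec s hs) as [_ Hrad].
  specialize (Hrad w Hw); split; lra.
Qed.

Section Division.
Variable cp : couple.
Local Notation U := (cU cp).
Variables (F : Z -> U) (ga : Z -> cB0 cp) (gc : Z -> cB1 cp) (Ga Gc : R) (s : C).
Hypothesis hga : forall n, norm (ga n) <= Ga.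
Hypothesis hgc : forall n, norm (gc n) <= Gc * exp (- IZR n).
Hypothesis hr0 : forall m, i0 cp (ga (m - 1)%Z) = plus (F m) (scal (s : C_AbsRing) (i0 cp (ga m))).
Hypothesis hr1 : forall m, i1 cp (gc (m - 1)%Z) = plus (F m) (scal (s : C_AbsRing) (i1 cp (gc m))).

Definition laurent_value (z : C) (y : U) : Prop :=
  exists l1 l0, is_series (pos_terms z gc) l1 /\ is_series (neg_terms z ga) l0 /\
    y = plus (i1 cp l1) (i0 cp l0).

Lemma gc_pos_bound (n : nat) : norm (gc (Z.of_nat n)) <= Gc * (/ exp 1) ^ n.
Proof. rewrite <- exp_neg_nat; apply hgc. Qed.

Lemma laurent_value_exists (z : C) : inA z -> exists y, laurent_value z y.
Proof.
  intros [Hz1 Hz2].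
  destruct (ex_series_pos_terms gc Gc (exp 1) z (exp_pos 1) gc_pos_bound Hz2) as [l1 H1].
  destruct (ex_series_neg_terms ga Ga z hga Hz1) as [l0 H0].
  exists (plus (i1 cp l1) (i0 cp l0)), l1, l0; auto.
Qed.

(* Telescoping the recurrence against the Laurent series of f:
   f(z) + g^0_(-1) = (z - s) y(z) + g^1_(-1). *)
Lemma laurent_identity (z : C) (x y : U) : inA z ->
  laurent_sum cp F z x -> laurent_value z y ->
  plus x (i0 cp (ga (-1)%Z)) = plus (scal ((z - s)%C : C_AbsRing) y) (i1 cp (gc (-1)%Z)).
Proof.
  intros [Hz1 _] [xp [xm [Hxp [Hxm ->]]]] [l1 [l0 [H1 [H0 ->]]]].
  assert (Hz0 : z <> 0%C) by (intro E; rewrite E, Cmod_0 in Hz1; lra).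
  assert (Ep : plus xp zero = plus (scal ((z - s)%C : C_AbsRing) (i1 cp l1)) (i1 cp (gc (-1)%Z))).
  { apply (Kconv_unique cp (fun N => plus (sum_n (pos_terms z F) N)
             (scal (z : C_AbsRing) (pos_terms z (fun m => i1 cp (gc m)) N)))).
    - apply Kconv_plus; [exact Hxp | exact (pos_remainder_vanish cp z gc l1 H1)].
    - apply (Kconv_ext cp (fun N => plus (scal ((z - s)%C : C_AbsRing)
               (sum_n (pos_terms z (fun m => i1 cp (gc m))) N)) (i1 cp (gc (-1)%Z)))).
      + intro N; symmetry; apply (telescope_pos F (fun m => i1 cp (gc m)) s z hr1).
      + apply Kconv_plus; [apply Kconv_scal, Kseries_pos_i1, H1 | apply Kconv_const]. }
  assert (Em : plus (scal ((z - s)%C : C_AbsRing) (i0 cp l0)) zero = plus xm (i0 cp (ga (-1)%Z))).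
  { apply (Kconv_unique cp (fun N => plus (scal ((z - s)%C : C_AbsRing)
             (sum_n (neg_terms z (fun m => i0 cp (ga m))) N))
             (scal (z : C_AbsRing) (neg_terms z (fun m => i0 cp (ga m)) (S N))))).
    - apply Kconv_plus;
        [apply Kconv_scal, Kseries_neg_i0, H0 | exact (neg_remainder_vanish cp z ga l0 H0)].
    - apply (Kconv_ext cp (fun N => plus (sum_n (neg_terms z F) N) (i0 cp (ga (-1)%Z)))).
      + intro N; symmetry; apply (telescope_neg F (fun m => i0 cp (ga m)) s z hr0 N Hz0).
      + apply Kconv_plus; [exact Hxm | apply Kconv_const]. }
  rewrite plus_zero_r in Ep, Em.
  rewrite <- plus_assoc, <- Em, Ep, scal_distr_l, <- !plus_assoc; f_equal; apply plus_comm.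
Qed.

Lemma laurent_value_lipschitz : inA s -> exists L, 0 <= L /\
  forall w y yw, w <> s -> Cmod (w - s)%C < annulus_radius s ->
    laurent_value s y -> laurent_value w yw -> Klt cp (minus y yw) (L * Cmod (w - s)%C).
Proof.
  intros hs; pose proof hs as [Hs1 Hs2]; pose proof (exp_pos 1) as He.
  destruct (annulus_radius_spec s hs) as [_ Hrad].
  set (r := (Cmod s + exp 1) / 2 / exp 1).
  assert (Hr : 0 <= r < 1) by (unfold r; split;
    [apply Rdiv_le_0_compat; pose proof (Cmod_ge_0 s); lra |
     apply Rmult_lt_reg_r with (exp 1); [lra|]; field_simplify; lra]).
  assert (Hre : r * exp 1 = (Cmod s + exp 1) / 2) by (unfold r; field; lra).
  destruct (pos_series_lipschitz gc Gc (exp 1) r He Hr gc_pos_bound) as [L1 [HL1 Lip1]].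
  destruct (neg_series_lipschitz ga Ga ((1 + Cmod s) / 2) ltac:(lra) hga) as [L0 [HL0 Lip0]].
  exists (L1 + L0 + 1); split; [lra|].
  intros w y yw Hws Hw [l1 [l0 [H1 [H0 ->]]]] [l1w [l0w [H1w [H0w ->]]]].
  destruct (Hrad w Hw) as [Hw1 Hw2].
  assert (Hd : 0 < Cmod (w - s)%C) by (apply Cmod_gt_0; intro E; apply Hws, Ceq_minus, E).
  pose proof (Lip1 w s l1w l1 ltac:(lra) ltac:(lra) H1w H1) as E1.
  pose proof (Lip0 w s l0w l0 ltac:(lra) ltac:(lra) H0w H0) as E0.
  exists (minus l0 l0w), (minus l1 l1w); split.
  - rewrite i0_minus, i1_minus, (minus_plus_plus (G := ModuleSpace.AbelianGroup _ U)).
    apply plus_comm.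
  - rewrite Bnorm_minus_sym in E1, E0.
    change (norm (minus l0 l0w) + norm (minus l1 l1w) < (L1 + L0 + 1) * Cmod (w - s)%C).
    assert (norm (minus l1 l1w) <= L1 * Cmod (w - s)%C) by exact E1.
    assert (norm (minus l0 l0w) <= L0 * Cmod (w - s)%C) by exact E0.
    nra.
Qed.

Lemma laurent_value_sum (heq : forall m, i0 cp (ga m) = i1 cp (gc m)) (z : C) (y : U) :
  laurent_value z y -> laurent_sum cp (fun n => i0 cp (ga n)) z y.
Proof.
  intros [l1 [l0 [H1 [H0 ->]]]]; exists (i1 cp l1), (i0 cp l0); split; [|split; [|reflexivity]].
  - apply (Kconv_ext cp (sum_n (pos_terms z (fun m => i1 cp (gc m)))));
      [|exact (Kseries_pos_i1 cp z gc l1 H1)].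
    intro N; apply sum_n_ext; intro n; unfold pos_terms; rewrite heq; reflexivity.
  - exact (Kseries_neg_i0 cp z ga l0 H0).
Qed.

Lemma division_by_linear_factor (f g : C -> U)
  (hf : forall z, inA z -> laurent_sum cp F z (f z)) (hs : inA s) (hfs : f s = zero)
  (hgs : Kderiv cp f s (g s))
  (hgz : forall z, inA z -> z <> s -> g z = scal ((/ (z - s))%C : C_AbsRing) (f z)) :
  (forall m, i0 cp (ga m) = i1 cp (gc m)) /\
  (forall z, inA z -> laurent_sum cp (fun n => i0 cp (ga n)) z (g z)).
Proof.
  assert (Hs0 : s <> 0%C) by (destruct hs as [Hs1 _]; intro E; rewrite E, Cmod_0 in Hs1; lra).
  (* at z = s the identity reads g^0_(-1) = g^1_(-1); the recurrence propagates it *)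
  assert (Hm1 : i0 cp (ga (-1)%Z) = i1 cp (gc (-1)%Z)).
  { destruct (laurent_value_exists s hs) as [y Hy].
    pose proof (laurent_identity s (f s) y hs (hf s hs) Hy) as E.
    replace (s - s)%C with (RtoC 0) in E by ring.
    rewrite hfs, (scal_zero_l y : scal (RtoC 0 : C_AbsRing) y = zero), !plus_zero_l in E.
    exact E. }
  assert (heq : forall m, i0 cp (ga m) = i1 cp (gc m))
    by exact (recurrence_agree F _ _ s (-1) Hs0 hr0 hr1 Hm1).
  (* hence f(z) = (z - s) y(z) on the annulus *)
  assert (Hfac : forall z y, inA z -> laurent_value z y -> f z = scal ((z - s)%C : C_AbsRing) y).
  { intros z y Hz Hy; pose proof (laurent_identity z (f z) y Hz (hf z Hz) Hy) as E.
    rewrite Hm1 in E; exact (plus_reg_r _ _ _ E). }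
  (* so g = y off s, and at s by uniqueness of the derivative *)
  assert (Hg : forall z y, inA z -> laurent_value z y -> g z = y).
  { intros z y Hz Hy; destruct (Ceq_dec z s) as [-> | Hzs].
    - destruct (laurent_value_lipschitz hs) as [L [HL Lip]].
      destruct (annulus_radius_spec s hs) as [Hrad _].
      symmetry; apply (Kderiv_factor cp f s (g s) y L (annulus_radius s) hgs hfs Hrad HL).
      intros w Hws Hw; pose proof (annulus_radius_inA s w hs Hw) as HwA.
      destruct (laurent_value_exists w HwA) as [yw Hyw].
      exists yw; split; [apply Hfac; assumption | apply Lip; assumption].
    - rewrite (hgz z Hz Hzs), (Hfac z y Hz Hy), scal_assoc.
      rewrite <- (scal_one y) at 2; f_equal.
      change ((/ (z - s) * (z - s))%C = RtoC 1); field.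
      intro E; apply Hzs, Ceq_minus, E. }
  split; [exact heq|]; intros z Hz.
  destruct (laurent_value_exists z Hz) as [y Hy]; rewrite (Hg z y Hz Hy).
  exact (laurent_value_sum heq z y Hy).
Qed.

End Division.

Lemma Rmax_mult_bound (x y a b c0 c1 : R) : 0 <= a -> 0 <= b -> 0 <= c0 -> 0 <= c1 ->
  x <= a * c0 -> y <= b * c1 -> Rmax x y <= Rmax a b * Rmax c0 c1.
Proof.
  intros Ha Hb Hc0 Hc1 Hx Hy.
  pose proof (Rmax_l a b); pose proof (Rmax_r a b).
  pose proof (Rmax_l c0 c1); pose proof (Rmax_r c0 c1).
  apply Rmax_lub; [eapply Rle_trans; [exact Hx|] | eapply Rle_trans; [exact Hy|]];
    apply Rmult_le_compat; lra.
Qed.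

Theorem lemma3p3 (X0 X1 : pseudolattice)
  (hX0 : translation_invariant X0) (hX1 : translation_invariant X1)
  (cp : couple) (fa : Z -> cB0 cp) (fc : Z -> cB1 cp)
  (hfJ : inJ X0 X1 cp fa fc)
  (f : C -> cU cp)
  (hf : forall z, inA z -> laurent_sum cp (fun n => i0 cp (fa n)) z (f z))
  (s : C) (hs : inA s) (hfs : f s = zero)
  (g : C -> cU cp)
  (hgs : Kderiv cp f s (g s))
  (hgz : forall z, inA z -> z <> s -> g z = scal ((/ (z - s))%C : C_AbsRing) (f z)) :
  exists (ga : Z -> cB0 cp) (gc : Z -> cB1 cp),
    inJ X0 X1 cp ga gc /\
    (forall z, inA z -> laurent_sum cp (fun n => i0 cp (ga n)) z (g z)) /\
    Jnorm X0 X1 cp ga gc <= delta s * Jnorm X0 X1 cp fa fc.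
Proof.
  destruct hfJ as [hfeq [hfa hfc]]; pose proof hs as [hs1 hs2].
  destruct (downward_solution X0 hX0 cp fa s hfa hs1) as [ga [Hga [Hga_norm hr0]]].
  destruct (upward_solution X1 hX1 cp fa fc s hfeq hfc hs2) as [gc [Hgc [Hgc_norm hr1]]].
  destruct (division_by_linear_factor cp (fun n => i0 cp (fa n)) ga gc
    (pl_norm X0 (cB0 cp) ga) (pl_norm X1 (cB1 cp) (eweight gc)) s
    (pl_coord X0 (cB0 cp) ga Hga) (eweight_coord X1 (cB1 cp) gc Hgc) hr0 hr1 f g hf hs hfs hgs hgz)
    as [heq Hsum].
  exists ga, gc; split; [split; [exact heq | split; assumption] | split; [exact Hsum|]].
  apply Rmax_mult_bound; try assumption; try (apply pl_norm_ge0; assumption);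
    left; apply Rinv_0_lt_compat; lra.
Qed.
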